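(* Let $a_1,a_2,\gamma_1,\zeta\in\mathbb R$ with $a_1,a_2\neq0$, $|a_1|\neq|a_2|$, and consider the equation $\mathcal Q_+=0$ with coefficients $\alpha_1=\beta_1=\dfrac{(a_1+a_2)\gamma_1}{2a_1}$, $\alpha_2=\beta_2=0$, $\gamma_2=\dfrac{a_2\gamma_1}{a_1}$, $\xi_1=\xi_2=\dfrac{3(a_1+a_2)\gamma_1^2}{8a_1^2}$, $\xi_3=\xi_4=\dfrac{(a_1-a_2)\gamma_1^2}{8a_1^2}$. This equation can be linearized by a real Möbius transformation $u_{n,m}=\dfrac{\alpha v_{n,m}+\beta}{\gamma v_{n,m}+\delta}$ (applied simultaneously at all lattice points, $\alpha\delta-\beta\gamma\neq0$) into the linear equation $$v_{n,m}+v_{n+1,m+1}+\frac{a_2}{a_1}\big(v_{n+1,m}+v_{n,m+1}\big)=0$$ if and only if $\zeta=\dfrac{(a_1+a_2)\gamma_1^3}{4a_1^3}$. In that case a linearizing transformation is given by $\beta=0$, $\gamma=-\dfrac{\alpha\gamma_1}{2a_1}$ (with $\alpha,\delta\neq0$ arbitrary).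
   Context: Let $u:\mathbb Z^2\to\mathbb R$. The equation $\mathcal Q_+=0$ is $a_1(u_{n,m}+u_{n+1,m+1})+a_2(u_{n+1,m}+u_{n,m+1})+(\alpha_1-\alpha_2)u_{n,m}u_{n+1,m}+(\alpha_1+\alpha_2)u_{n,m+1}u_{n+1,m+1}+(\beta_1-\beta_2)u_{n,m}u_{n,m+1}+(\beta_1+\beta_2)u_{n+1,m}u_{n+1,m+1}+\gamma_1u_{n,m}u_{n+1,m+1}+\gamma_2u_{n+1,m}u_{n,m+1}+(\xi_1-\xi_3)u_{n,m}u_{n+1,m}u_{n,m+1}+(\xi_1+\xi_3)u_{n,m}u_{n+1,m}u_{n+1,m+1}+(\xi_2-\xi_4)u_{n+1,m}u_{n,m+1}u_{n+1,m+1}+(\xi_2+\xi_4)u_{n,m}u_{n,m+1}u_{n+1,m+1}+\zeta u_{n,m}u_{n+1,m}u_{n,m+1}u_{n+1,m+1}=0$. ''Linearized by the Möbius transformation into the linear equation'' means: substituting $u_{k,l}=(\alpha v_{k,l}+\beta)/(\gamma v_{k,l}+\delta)$ for the four lattice values and multiplying by the product of the four denominators yields a nonzero constant multiple of the stated linear equation in $v$. *)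

From Stdlib Require Import Reals.
Open Scope R_scope.

(* Lattice values of one elementary quad:
   x1 = u_{n,m}, x2 = u_{n+1,m}, x3 = u_{n,m+1}, x4 = u_{n+1,m+1}. *)

Definition Qplus (a1 a2 al1 al2 be1 be2 g1 g2 xi1 xi2 xi3 xi4 ze : R)
  (x1 x2 x3 x4 : R) : R :=
  a1*(x1+x4) + a2*(x2+x3)
  + (al1-al2)*x1*x2 + (al1+al2)*x3*x4
  + (be1-be2)*x1*x3 + (be1+be2)*x2*x4
  + g1*x1*x4 + g2*x2*x3
  + (xi1-xi3)*x1*x2*x3 + (xi1+xi3)*x1*x2*x4
  + (xi2-xi4)*x2*x3*x4 + (xi2+xi4)*x1*x3*x4
  + ze*x1*x2*x3*x4.

(* Q_+ evaluated at u_k = p_k / q_k and multiplied by q1 q2 q3 q4, written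
   as a polynomial (no division): each monomial prod_{k in S} u_k becomes
   prod_{k in S} p_k * prod_{k notin S} q_k. *)
Definition QplusCleared (a1 a2 al1 al2 be1 be2 g1 g2 xi1 xi2 xi3 xi4 ze : R)
  (p1 p2 p3 p4 q1 q2 q3 q4 : R) : R :=
  let m (b1 b2 b3 b4 : bool) :=
    (if b1 then p1 else q1) * (if b2 then p2 else q2) *
    (if b3 then p3 else q3) * (if b4 then p4 else q4) in
  a1*(m true false false false + m false false false true)
  + a2*(m false true false false + m false false true false)
  + (al1-al2)*m true true false false + (al1+al2)*m false false true true
  + (be1-be2)*m true false true false + (be1+be2)*m false true false true
  + g1*m true false false true + g2*m false true true false
  + (xi1-xi3)*m true true true false + (xi1+xi3)*m true true false true
  + (xi2-xi4)*m false true true true + (xi2+xi4)*m true false true true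
  + ze*m true true true true.

(* The Moebius substitution u_k = (al v_k + be)/(ga v_k + de), cleared of
   denominators, is a nonzero constant multiple of the linear form L. *)
Definition linearizes_by (Qc : R -> R -> R -> R -> R -> R -> R -> R -> R)
  (L : R -> R -> R -> R -> R) (al be ga de : R) : Prop :=
  exists K : R, K <> 0 /\
    forall v1 v2 v3 v4 : R,
      Qc (al*v1+be) (al*v2+be) (al*v3+be) (al*v4+be)
         (ga*v1+de) (ga*v2+de) (ga*v3+de) (ga*v4+de)
      = K * L v1 v2 v3 v4.

Definition linearizable (Qc : R -> R -> R -> R -> R -> R -> R -> R -> R)
  (L : R -> R -> R -> R -> R) : Prop :=
  exists al be ga de : R, al*de - be*ga <> 0 /\ linearizes_by Qc L al be ga de.

Definition Llin (a1 a2 : R) (v1 v2 v3 v4 : R) : R :=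
  v1 + v4 + (a2/a1)*(v2 + v3).

(* Clearing denominators turns Q_+(Möbius(v)) into a polynomial that is affine in each v_k,
   so a linearizing identity extends to homogeneous coordinates v_k = (v, w).  There one may
   evaluate at the preimage of u = 0 and at the preimage of u = ∞, where only a single monomial
   of Q_+ survives.  Comparing with the linear side forces successively α ≠ 0, β = 0,
   K = a1 α δ^3, γ = -(α1-α2) α/(a1+a2) and ζ = 2 (α1-α2)^3/(a1+a2)^2, for any coefficients of
   Q_+; for the given coefficients the last equation is the stated condition on ζ, and the
   transformation it leaves is checked to linearize directly. *)
From Stdlib Require Import Reals Lra.
Open Scope R_scope.

(* [(v, w)] are homogeneous coordinates of the lattice value [v / w]. *)
Definition mobius_pullback (Qc : R -> R -> R -> R -> R -> R -> R -> R -> R)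
  (al be ga de v1 w1 v2 w2 v3 w3 v4 w4 : R) : R :=
  Qc (al*v1+be*w1) (al*v2+be*w2) (al*v3+be*w3) (al*v4+be*w4)
     (ga*v1+de*w1) (ga*v2+de*w2) (ga*v3+de*w3) (ga*v4+de*w4).

Definition Llin_hom (a1 a2 v1 w1 v2 w2 v3 w3 v4 w4 : R) : R :=
  v1*w2*w3*w4 + w1*w2*w3*v4 + (a2/a1)*(w1*v2*w3*w4 + w1*w2*v3*w4).

Lemma linear_form_eq0 (f : R -> R -> R) :
  (forall v w, f v w = v * f 1 0 + w * f 0 1) ->
  (forall v, f v 1 = 0) -> forall v w, f v w = 0.
Proof.
  intros hlin hchart v w.
  assert (h01 : f 0 1 = 0) by apply hchart.
  assert (h10 : f 1 0 = 0).
  { pose proof (hchart 1) as h11. rewrite hlin, h01 in h11. lra. }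
  rewrite hlin, h10, h01. ring.
Qed.

Lemma Rmult_eq0_nonzero_r (x c : R) : x * c = 0 -> c <> 0 -> x = 0.
Proof. intros h hc. destruct (Rmult_integral _ _ h); tauto. Qed.

Lemma Rplus_neq0_of_Rabs_neq (a1 a2 : R) : Rabs a1 <> Rabs a2 -> a1 + a2 <> 0.
Proof.
  intros hne h. apply hne.
  replace a2 with (- a1) by lra. now rewrite Rabs_Ropp.
Qed.

Ltac nonzero :=
  repeat (apply Rmult_integral_contrapositive_currified || apply pow_nonzero);
  auto.

Section Linearization.

Variables a1 a2 al1 al2 be1 be2 g1 g2 xi1 xi2 xi3 xi4 ze : R.

Local Notation Q := (QplusCleared a1 a2 al1 al2 be1 be2 g1 g2 xi1 xi2 xi3 xi4 ze).

Variables al be ga de K : R.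

Local Ltac homogenize_slot d f :=
  apply (linear_form_eq0 f);
  [intros; unfold d, mobius_pullback, QplusCleared, Llin_hom; simpl; ring|].

Lemma mobius_pullback_homogenize :
  (forall v1 v2 v3 v4,
     Q (al*v1+be) (al*v2+be) (al*v3+be) (al*v4+be)
       (ga*v1+de) (ga*v2+de) (ga*v3+de) (ga*v4+de) = K * Llin a1 a2 v1 v2 v3 v4) ->
  forall v1 w1 v2 w2 v3 w3 v4 w4,
    mobius_pullback Q al be ga de v1 w1 v2 w2 v3 w3 v4 w4
    = K * Llin_hom a1 a2 v1 w1 v2 w2 v3 w3 v4 w4.
Proof.
  intros haff.
  set (defect v1 w1 v2 w2 v3 w3 v4 w4 :=
    mobius_pullback Q al be ga de v1 w1 v2 w2 v3 w3 v4 w4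
    - K * Llin_hom a1 a2 v1 w1 v2 w2 v3 w3 v4 w4).
  intros v1 w1 v2 w2 v3 w3 v4 w4. apply Rminus_diag_uniq.
  change (defect v1 w1 v2 w2 v3 w3 v4 w4 = 0).
  homogenize_slot defect (fun v w => defect v w v2 w2 v3 w3 v4 w4). clear v1 w1; intros v1.
  homogenize_slot defect (fun v w => defect v1 1 v w v3 w3 v4 w4). clear v2 w2; intros v2.
  homogenize_slot defect (fun v w => defect v1 1 v2 1 v w v4 w4). clear v3 w3; intros v3.
  homogenize_slot defect (fun v w => defect v1 1 v2 1 v3 1 v w). clear v4 w4; intros v4.
  unfold defect, mobius_pullback. rewrite !Rmult_1_r, haff.
  unfold Llin, Llin_hom. ring.
Qed.

Hypothesis ha1 : a1 <> 0.
Hypothesis hs : a1 + a2 <> 0.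
Hypothesis hdet : al*de - be*ga <> 0.
Hypothesis hK : K <> 0.
Hypothesis Hhom : forall v1 w1 v2 w2 v3 w3 v4 w4,
  mobius_pullback Q al be ga de v1 w1 v2 w2 v3 w3 v4 w4
  = K * Llin_hom a1 a2 v1 w1 v2 w2 v3 w3 v4 w4.

(* [(-be, al)] is the preimage of u = 0 and [(de, -ga)] that of u = ∞. *)
Lemma mobius_pullback_at_zeros : K * be * al^3 * (a1 + a2) = 0.
Proof.
  transitivity (-(a1/2) * (K * Llin_hom a1 a2 (-be) al (-be) al (-be) al (-be) al)).
  - unfold Llin_hom. field. exact ha1.
  - rewrite <- Hhom. unfold mobius_pullback, QplusCleared. simpl. ring.
Qed.

Lemma mobius_pullback_at_pole_zeros :
  a1^2 * (al*de - be*ga)^4 = K * al^2 * (a1*de*al + (a1 + 2*a2)*ga*be).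
Proof.
  transitivity (a1 * mobius_pullback Q al be ga de de (-ga) (-be) al (-be) al (-be) al).
  - unfold mobius_pullback, QplusCleared. simpl. ring.
  - rewrite Hhom. unfold Llin_hom. field. exact ha1.
Qed.

Lemma linearizing_al_neq0 : al <> 0.
Proof.
  intros hal. pose proof mobius_pullback_at_pole_zeros as h.
  rewrite hal in h, hdet.
  assert (hnz : a1^2 * (0*de - be*ga)^4 <> 0) by nonzero.
  apply hnz. rewrite h. ring.
Qed.

Lemma linearizing_be_eq0 : be = 0.
Proof.
  pose proof linearizing_al_neq0.
  apply (Rmult_eq0_nonzero_r _ (K * al^3 * (a1 + a2))); [|nonzero].
  rewrite <- mobius_pullback_at_zeros. ring.
Qed.

Lemma linearizing_de_neq0 : de <> 0.
Proof. intros hde. apply hdet. rewrite hde, linearizing_be_eq0. ring. Qed.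

Lemma linearizing_constant : K = a1 * al * de^3.
Proof.
  pose proof linearizing_al_neq0. pose proof linearizing_de_neq0.
  pose proof mobius_pullback_at_pole_zeros as h. rewrite linearizing_be_eq0 in h.
  apply (Rmult_eq_reg_r (a1 * al^3 * de)); [|nonzero].
  transitivity (a1^2 * (al*de - 0*ga)^4); [rewrite h|]; ring.
Qed.

Lemma mobius_pullback_at_poles_zeros :
  (al1 - al2) * (al*de)^4 = - K * ga * de * al^2 * (a1 + a2) / a1.
Proof.
  transitivity (mobius_pullback Q al be ga de de (-ga) de (-ga) (-be) al (-be) al).
  - unfold mobius_pullback, QplusCleared. rewrite linearizing_be_eq0. simpl. ring.
  - rewrite Hhom, linearizing_be_eq0. unfold Llin_hom. field. exact ha1.
Qed.

Lemma linearizing_ga : ga = - (al1 - al2) * al / (a1 + a2).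
Proof.
  pose proof linearizing_al_neq0. pose proof linearizing_de_neq0.
  pose proof mobius_pullback_at_poles_zeros as h. rewrite linearizing_constant in h.
  apply (Rmult_eq_reg_r ((a1 + a2) * al^3 * de^4)); [|nonzero].
  transitivity (- ((al1 - al2) * (al*de)^4)); [rewrite h; field; exact ha1|].
  field. exact hs.
Qed.

Lemma mobius_pullback_at_poles :
  ze * (al*de - be*ga)^4 = - 2 * K * de * ga^3 * (a1 + a2) / a1.
Proof.
  transitivity (mobius_pullback Q al be ga de de (-ga) de (-ga) de (-ga) de (-ga)).
  - unfold mobius_pullback, QplusCleared. simpl. ring.
  - rewrite Hhom. unfold Llin_hom. field. exact ha1.
Qed.

Lemma linearizing_ze : ze = 2 * (al1 - al2)^3 / (a1 + a2)^2.
Proof.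
  pose proof linearizing_al_neq0. pose proof linearizing_de_neq0.
  pose proof mobius_pullback_at_poles as h.
  rewrite linearizing_constant, linearizing_be_eq0, linearizing_ga in h.
  apply (Rmult_eq_reg_r ((al*de)^4)); [|nonzero].
  transitivity (ze * (al*de - 0 * (- (al1 - al2) * al / (a1 + a2)))^4); [ring|].
  rewrite h. field. auto.
Qed.

End Linearization.

Lemma linearizable_Qplus_ze (a1 a2 al1 al2 be1 be2 g1 g2 xi1 xi2 xi3 xi4 ze : R) :
  a1 <> 0 -> a1 + a2 <> 0 ->
  linearizable (QplusCleared a1 a2 al1 al2 be1 be2 g1 g2 xi1 xi2 xi3 xi4 ze) (Llin a1 a2) ->
  ze = 2 * (al1 - al2)^3 / (a1 + a2)^2.
Proof.
  intros ha1 hs [al [be [ga [de [hdet [K [hK haff]]]]]]].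
  eapply linearizing_ze; eauto.
  apply mobius_pullback_homogenize. exact haff.
Qed.

Lemma Qplus_linearizes_by (a1 a2 g1 al de : R) :
  a1 <> 0 -> al <> 0 -> de <> 0 ->
  linearizes_by
    (QplusCleared a1 a2 ((a1+a2)*g1/(2*a1)) 0 ((a1+a2)*g1/(2*a1)) 0 g1 (a2*g1/a1)
       (3*(a1+a2)*g1^2/(8*a1^2)) (3*(a1+a2)*g1^2/(8*a1^2))
       ((a1-a2)*g1^2/(8*a1^2)) ((a1-a2)*g1^2/(8*a1^2)) ((a1+a2)*g1^3/(4*a1^3)))
    (Llin a1 a2) al 0 (-(al*g1)/(2*a1)) de.
Proof.
  intros ha1 hal hde. exists (a1 * al * de^3). split; [nonzero|].
  intros. unfold QplusCleared, Llin. simpl. field. exact ha1.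
Qed.

Theorem mainTheorem5 (a1 a2 g1 ze : R)
  (ha1 : a1 <> 0) (ha2 : a2 <> 0) (hne : Rabs a1 <> Rabs a2) :
  let al1 := (a1+a2)*g1/(2*a1) in
  let be1 := (a1+a2)*g1/(2*a1) in
  let al2 := 0 in
  let be2 := 0 in
  let g2 := a2*g1/a1 in
  let xi1 := 3*(a1+a2)*g1^2/(8*a1^2) in
  let xi2 := 3*(a1+a2)*g1^2/(8*a1^2) in
  let xi3 := (a1-a2)*g1^2/(8*a1^2) in
  let xi4 := (a1-a2)*g1^2/(8*a1^2) in
  let Qc := QplusCleared a1 a2 al1 al2 be1 be2 g1 g2 xi1 xi2 xi3 xi4 ze in
  (linearizable Qc (Llin a1 a2) <-> ze = (a1+a2)*g1^3/(4*a1^3)) /\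
  (ze = (a1+a2)*g1^3/(4*a1^3) ->
     forall al de : R, al <> 0 -> de <> 0 ->
       linearizes_by Qc (Llin a1 a2) al 0 (-(al*g1)/(2*a1)) de).
Proof.
  intros al1 be1 al2 be2 g2 xi1 xi2 xi3 xi4 Qc.
  pose proof (Rplus_neq0_of_Rabs_neq _ _ hne) as hs.
  assert (hsuff : ze = (a1+a2)*g1^3/(4*a1^3) -> forall al de, al <> 0 -> de <> 0 ->
            linearizes_by Qc (Llin a1 a2) al 0 (-(al*g1)/(2*a1)) de).
  { intros hz al de hal hde. subst ze. now apply Qplus_linearizes_by. }
  split; [split|exact hsuff].
  - intros hlin. apply linearizable_Qplus_ze in hlin; [|exact ha1|exact hs].
    rewrite hlin. unfold al1, al2. field. auto.
  - intros hz. exists 1, 0, (-(1*g1)/(2*a1)), 1. split; [lra|].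
    apply hsuff; [exact hz|lra|lra].
Qed.
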